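(* The code $\mathcal{C}_0=\{3456,123,145,256,45,56,1,2,3,\emptyset\}\subseteq 2^{[6]}$ (where e.g. $3456$ denotes $\{3,4,5,6\}$) is minimally non-convex and has no local obstructions of the first or second kind.
   Context: A code is a subset $\mathcal{C}\subseteq 2^{[n]}$. For $\sigma\subseteq[n]$, $\mathrm{Tk}_{\mathcal{C}}(\sigma)=\{c\in\mathcal{C}\mid\sigma\subseteq c\}$; a trunk in $\mathcal{C}$ is a subset that is empty or of this form. A morphism $f:\mathcal{C}\to\mathcal{D}$ is a function such that preimages of trunks in $\mathcal{D}$ are trunks in $\mathcal{C}$; an isomorphism is a morphism whose inverse function is a morphism. Given $U_1,\dots,U_n\subseteq X$, $\mathrm{code}(\mathcal{U},X)=\{\sigma\subseteq[n]\mid \bigcap_{i\in\sigma}U_i\setminus\bigcup_{j\notin\sigma}U_j\neq\emptyset\}$, the empty intersection being $X$. A code is convex if it equals $\mathrm{code}(\mathcal{U},X)$ for some open convex $X\subseteq\mathbb{R}^d$ and convex open $U_i\subseteq X$. A code $\mathcal{C}$ is minimally non-convex if it is not convex, every trunk properly contained in $\mathcal{C}$ is convex, and every image $f(\mathcal{C})$ under a morphism that is not isomorphic to $\mathcal{C}$ is convex. $\Delta(\mathcal{C})$ denotes the simplicial complex consisting of all subsets of codewords of $\mathcal{C}$. $\mathcal{C}$ has a local obstruction (of the first kind) at $\sigma\in\Delta(\mathcal{C})\setminus\mathcal{C}$ if $\mathrm{link}_{\Delta(\mathcal{C})}(\sigma)$ is not contractible, and a local obstruction of the second kind at $\sigma\in\Delta(\mathcal{C})\setminus\mathcal{C}$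 if $\mathrm{link}_{\Delta(\mathcal{C})}(\sigma)$ is not collapsible. *)

From mathcomp Require Import all_boot.
From Stdlib Require Import Reals Relations.

Set Implicit Arguments.
Unset Strict Implicit.
Unset Printing Implicit Defensive.

(* A code on [n] is a set of subsets of 'I_n (element i+1 of [n] is ordinal i). *)
Definition code (n : nat) := {set {set 'I_n}}.

Definition Tk (n : nat) (C : code n) (s : {set 'I_n}) : code n :=
  [set c in C | s \subset c].

Definition is_trunk (n : nat) (C : code n) (T : code n) : Prop :=
  T = set0 \/ exists s : {set 'I_n}, T = Tk C s.

(* f : C -> D morphism (values of f outside C are irrelevant) *)
Definition code_morphism (n m : nat) (C : code n) (D : code m)
  (f : {set 'I_n} -> {set 'I_m}) : Prop :=
  (forall c, c \in C -> f c \in D) /\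
  (forall T : code m, is_trunk D T -> is_trunk C [set c in C | f c \in T]).

Definition codes_isomorphic (n m : nat) (C : code n) (D : code m) : Prop :=
  exists (f : {set 'I_n} -> {set 'I_m}) (g : {set 'I_m} -> {set 'I_n}),
    [/\ code_morphism C D f, code_morphism D C g,
        (forall c, c \in C -> g (f c) = c) &
        (forall d, d \in D -> f (g d) = d)].

Definition Rvec (d : nat) := 'I_d -> R.

Definition open_set (d : nat) (X : Rvec d -> Prop) : Prop :=
  forall x, X x -> exists eps, (0 < eps)%R /\
    forall y : Rvec d, (forall i, (Rabs (y i - x i) < eps)%R) -> X y.

Definition convex_set (d : nat) (X : Rvec d -> Prop) : Prop :=
  forall x y t, X x -> X y -> (0 <= t <= 1)%R ->
    X (fun i => t * x i + (1 - t) * y i)%R.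

Definition realizes (n d : nat) (C : code n) (U : 'I_n -> Rvec d -> Prop)
  (X : Rvec d -> Prop) : Prop :=
  forall s : {set 'I_n},
    s \in C <-> exists p, X p /\ (forall i, U i p <-> i \in s).

Definition convex_code (n : nat) (C : code n) : Prop :=
  exists (d : nat) (X : Rvec d -> Prop) (U : 'I_n -> Rvec d -> Prop),
    [/\ open_set X, convex_set X,
        (forall i, open_set (U i) /\ convex_set (U i) /\ (forall p, U i p -> X p)) &
        realizes C U X].

Definition minimally_non_convex (n : nat) (C : code n) : Prop :=
  [/\ ~ convex_code C,
      (forall T : code n, is_trunk C T -> T \proper C -> convex_code T) &
      (forall (m : nat) (D : code m) (f : {set 'I_n} -> {set 'I_m}),
          code_morphism C D f ->
          ~ codes_isomorphic C [set f c | c in C] ->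
          convex_code [set f c | c in C])].

Definition Delta (n : nat) (C : code n) : {set {set 'I_n}} :=
  [set t : {set 'I_n} | [exists c in C, t \subset c]].

Definition link (n : nat) (K : {set {set 'I_n}}) (s : {set 'I_n}) : {set {set 'I_n}} :=
  [set t in K | [disjoint t & s] && (t :|: s \in K)].

Definition realization (n : nat) (K : {set {set 'I_n}}) (x : Rvec n) : Prop :=
  (forall i, (0 <= x i)%R) /\ \big[Rplus/0%R]_(i < n) x i = 1%R /\
  exists t, t \in K /\ (forall i, i \notin t -> x i = 0%R).

Definition contractible_set (n : nat) (X : Rvec n -> Prop) : Prop :=
  exists (x0 : Rvec n) (H : R -> Rvec n -> Rvec n),
    [/\ X x0,
        (forall t x, (0 <= t <= 1)%R -> X x -> X (H t x)),
        (forall x, X x -> H 0%R x = x),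
        (forall x, X x -> H 1%R x = x0) &
        (forall t x, (0 <= t <= 1)%R -> X x -> forall eps, (0 < eps)%R ->
          exists delta, (0 < delta)%R /\
            forall s y, (0 <= s <= 1)%R -> X y -> (Rabs (s - t) < delta)%R ->
              (forall i, (Rabs (y i - x i) < delta)%R) ->
              forall i, (Rabs (H s y i - H t x i) < eps)%R)].

Definition contractible (n : nat) (K : {set {set 'I_n}}) : Prop :=
  contractible_set (realization K).

Definition elem_collapse (n : nat) (K K' : {set {set 'I_n}}) : Prop :=
  exists t s : {set 'I_n},
    [/\ s \in K, t \proper s, #|s| = #|t|.+1,
        (forall g, g \in K -> t \subset g -> g = t \/ g = s) &
        K' = K :\ t :\ s].

Definition collapsible (n : nat) (K : {set {set 'I_n}}) : Prop :=
  exists v : 'I_n, clos_refl_trans _ (@elem_collapse n) K [set set0; [set v]].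

Definition local_obstruction1 (n : nat) (C : code n) (s : {set 'I_n}) : Prop :=
  s \in Delta C /\ s \notin C /\ ~ contractible (link (Delta C) s).

Definition local_obstruction2 (n : nat) (C : code n) (s : {set 'I_n}) : Prop :=
  s \in Delta C /\ s \notin C /\ ~ collapsible (link (Delta C) s).

(* cw l = the codeword of [6] whose elements (numbered 1..6) are listed in l *)
Definition cw (l : seq nat) : {set 'I_6} := [set i : 'I_6 | (nat_of_ord i).+1 \in l].

Definition C0 : code 6 :=
  [set cw [:: 3; 4; 5; 6]; cw [:: 1; 2; 3]; cw [:: 1; 4; 5]; cw [:: 2; 5; 6];
       cw [:: 4; 5]; cw [:: 5; 6]; cw [:: 1]; cw [:: 2]; cw [:: 3]; cw [::]].

From HB Require Import structures.
From Pilot Require Import Defs.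
From mathcomp Require Import all_boot.
From Stdlib Require Import Reals Relations Lra FunctionalExtensionality Classical ClassicalEpsilon.

Set Implicit Arguments.
Unset Strict Implicit.
Unset Printing Implicit Defensive.

(* Non-convexity: in a realization of C0, the segment from a point of 145 to a
   point of 256 stays in U5, which is covered by U4 and U6, so it crosses a
   point c of U3 /\ U4 /\ U6.  The segment from a point of 123 to c stays in U3
   and leaves U1 /\ U2 (which avoids U5) at some w.  Within U3, U1 and U2
   coincide; a point z of U1 /\ U2 just before w, pushed slightly towards the
   145-point and towards the 256-point, gives two points of U1 /\ U2 with w
   between them, a contradiction.
   Minimality: for each neuron i there is a realization by open polyhedra in
   R^3 of C0 with i (mostly) forgotten, from which every trunk other than
   Tk{i} is pulled back; every proper trunk, and every image under a morphism
   that is not an isomorphism, only involves such trunks for some i, and is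
   realized by intersections of these polyhedra.
   Links: all links of non-codewords are cones, except the link of 5, which is
   contracted in two stages; collapsibility is a finite search. *)

(** * Contractible complexes *)

Open Scope R_scope.

Lemma Rplus_assoc' : associative Rplus.
Proof. by move=> x y z; rewrite Rplus_assoc. Qed.
HB.instance Definition _ := Monoid.isComLaw.Build R 0 Rplus Rplus_assoc' Rplus_comm Rplus_0_l.

Lemma sumR_ge0 n (P : pred 'I_n) (F : 'I_n -> R) :
  (forall i, 0 <= F i) -> 0 <= \big[Rplus/0]_(i < n | P i) F i.
Proof. by move=> F_ge0; apply: big_ind => [|x y|i _]; [lra|lra|apply: F_ge0]. Qed.

Lemma le_sumR n (F : 'I_n -> R) i : (forall j, 0 <= F j) -> F i <= \big[Rplus/0]_(j < n) F j.
Proof.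
move=> F_ge0; rewrite (bigD1 i) //=.
by rewrite -{1}(Rplus_0_r (F i)); apply/Rplus_le_compat_l/sumR_ge0.
Qed.

Lemma sumR_lin n (a b : R) (F G : 'I_n -> R) :
  \big[Rplus/0]_(i < n) (a * F i + b * G i) =
  a * \big[Rplus/0]_(i < n) F i + b * \big[Rplus/0]_(i < n) G i.
Proof.
elim: n F G => [|n IH] F G; first by rewrite !big_ord0; ring.
rewrite !big_ord_recr /= IH.
by move: (\big[Rplus/0]_(i < n) F _) (\big[Rplus/0]_(i < n) G _) => sF sG; ring.
Qed.

Definition unit_vec n (v : 'I_n) : Rvec n := fun i => if i == v then 1 else 0.

Lemma unit_vec_bounds n (v i : 'I_n) : 0 <= unit_vec v i <= 1.
Proof. by rewrite /unit_vec; case: (i == v); lra. Qed.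

Lemma sum_unit_vec n (v : 'I_n) : \big[Rplus/0]_(i < n) unit_vec v i = 1.
Proof. by rewrite (bigD1 v) //= /unit_vec eqxx big1 ?Rplus_0_r // => i /negbTE ->. Qed.

Lemma realization_unit_vec n (K : {set {set 'I_n}}) (v : 'I_n) :
  [set v] \in K -> realization K (unit_vec v).
Proof.
move=> Kv; split; first by move=> i; have := unit_vec_bounds v i; lra.
split; first exact: sum_unit_vec.
by exists [set v]; split => // i; rewrite inE /unit_vec => /negbTE ->.
Qed.

Lemma realization_bounds n (K : {set {set 'I_n}}) x i : realization K x -> 0 <= x i <= 1.
Proof. by case=> x_ge0 [sum_x _]; split; [|rewrite -sum_x; apply: le_sumR]. Qed.

Definition l1dist n (x y : Rvec n) := \big[Rplus/0]_(i < n) Rabs (y i - x i).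

Lemma l1dist_ge n (x y : Rvec n) i : Rabs (y i - x i) <= l1dist x y.
Proof. by apply: le_sumR => j; apply: Rabs_pos. Qed.

Lemma l1dist_le n (x y : Rvec n) d :
  (forall i, Rabs (y i - x i) < d) -> l1dist x y <= INR n * d.
Proof.
rewrite /l1dist; elim: n x y => [|n IH] x y lt_d; first by rewrite big_ord0 /=; lra.
rewrite big_ord_recr S_INR /=.
have /= := IH (fun i => x (widen_ord (leqnSn n) i)) (fun i => y (widen_ord (leqnSn n) i))
  (fun i => lt_d _).
have := lt_d ord_max; lra.
Qed.

Definition jointly_continuous n (X : Rvec n -> Prop) (H : R -> Rvec n -> Rvec n) :=
  forall t x, 0 <= t <= 1 -> X x -> forall eps, 0 < eps ->
    exists delta, 0 < delta /\
      forall s y, 0 <= s <= 1 -> X y -> Rabs (s - t) < delta ->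
        (forall i, Rabs (y i - x i) < delta) ->
        forall i, Rabs (H s y i - H t x i) < eps.

Lemma lipschitz_jointly_continuous n (X : Rvec n -> Prop) H M : 0 <= M ->
  (forall s t x y i, 0 <= s <= 1 -> 0 <= t <= 1 -> X x -> X y ->
     Rabs (H s y i - H t x i) <= M * (Rabs (s - t) + l1dist x y)) ->
  jointly_continuous X H.
Proof.
move=> M_ge0 lipH t x t01 Xx eps eps_gt0.
have n_ge0 := pos_INR n.
have den_gt0 : 0 < (INR n + 1) * M + 1 by nra.
exists (eps / ((INR n + 1) * M + 1)); split; first exact: Rdiv_lt_0_compat.
move=> s y s01 Xy st_lt yx_lt i.
set d := eps / _ in st_lt yx_lt.
have d_gt0 : 0 < d by apply: Rdiv_lt_0_compat.
have eps_d : eps = d * ((INR n + 1) * M + 1) by rewrite /d; field; lra.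
have := lipH s t x y i s01 t01 Xx Xy; have := l1dist_le yx_lt.
have : M * (Rabs (s - t) + l1dist x y) <= M * ((INR n + 1) * d).
  by apply: Rmult_le_compat_l => //; have := l1dist_le yx_lt; lra.
nra.
Qed.


Lemma Rabs_mul_le u v U V : Rabs u <= U -> Rabs v <= V -> Rabs (u * v) <= U * V.
Proof. by move=> le_u le_v; rewrite Rabs_mult; apply: Rmult_le_compat => //; apply: Rabs_pos. Qed.

Definition first_half (t : R) := Rmin (2 * t) 1.
Definition second_half (t : R) := Rmax (2 * t - 1) 0.

Lemma first_half_bounds t : 0 <= t <= 1 -> 0 <= first_half t <= 1.
Proof. by rewrite /first_half /Rmin; case: Rle_dec; lra. Qed.

Lemma second_half_bounds t : 0 <= t <= 1 -> 0 <= second_half t <= 1.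
Proof. by rewrite /second_half /Rmax; case: Rle_dec; lra. Qed.

Lemma first_half_lip s t : Rabs (first_half s - first_half t) <= 2 * Rabs (s - t).
Proof.
have := Rle_abs (s - t); have := Rle_abs (- (s - t)); rewrite Rabs_Ropp => ? ?.
by apply: Rabs_le; rewrite /first_half /Rmin; do 2 case: Rle_dec; lra.
Qed.

Lemma second_half_lip s t : Rabs (second_half s - second_half t) <= 2 * Rabs (s - t).
Proof.
have := Rle_abs (s - t); have := Rle_abs (- (s - t)); rewrite Rabs_Ropp => ? ?.
by apply: Rabs_le; rewrite /second_half /Rmax; do 2 case: Rle_dec; lra.
Qed.

Lemma first_half_done t : 0 < second_half t -> first_half t = 1.
Proof. by rewrite /second_half /first_half /Rmax /Rmin; do 2 case: Rle_dec; lra. Qed.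

Lemma halves0 : first_half 0 = 0 /\ second_half 0 = 0.
Proof. by rewrite /first_half /second_half /Rmin /Rmax; split; case: Rle_dec; lra. Qed.

Lemma second_half1 : second_half 1 = 1.
Proof. by rewrite /second_half /Rmax; case: Rle_dec; lra. Qed.

(* Follow the segment from [x] to [Q x], then the segment from [Q x] to [e]. *)
Definition push_then_cone n (Q : Rvec n -> Rvec n) (e : Rvec n) (t : R) (x : Rvec n) : Rvec n :=
  fun i => (1 - second_half t) * ((1 - first_half t) * x i + first_half t * Q x i)
           + second_half t * e i.

Lemma push_then_cone_lip a a' b b' X Y QX QY e S D L :
  0 <= a <= 1 -> 0 <= a' <= 1 -> 0 <= b <= 1 -> 0 <= b' <= 1 -> 0 <= e <= 1 ->
  0 <= X <= 1 -> 0 <= Y <= 1 -> 0 <= QX <= 1 -> 0 <= QY <= 1 -> 0 <= L ->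
  Rabs (a - a') <= 2 * D -> Rabs (b - b') <= 2 * D ->
  Rabs (Y - X) <= S -> Rabs (QY - QX) <= L * S ->
  Rabs (((1 - a) * ((1 - b) * Y + b * QY) + a * e) -
        ((1 - a') * ((1 - b') * X + b' * QX) + a' * e)) <= (L + 6) * (D + S).
Proof.
move=> a01 a'01 b01 b'01 e01 X01 Y01 QX01 QY01 L_ge0 da db dY dQ.
have S_ge0 : 0 <= S by have := Rabs_pos (Y - X); lra.
have D_ge0 : 0 <= D by have := Rabs_pos (a - a'); lra.
set W := (1 - b) * Y + b * QY; set W' := (1 - b') * X + b' * QX.
have -> : (1 - a) * W + a * e - ((1 - a') * W' + a' * e)
          = (1 - a) * (W - W') + (a' - a) * (W' - e) by ring.
have dW : Rabs (W - W') <= 4 * D + (1 + L) * S.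
  have -> : W - W' = (1 - b) * (Y - X) + (b' - b) * X + (b * (QY - QX) + (b - b') * QX)
    by rewrite /W /W'; ring.
  have B1 : Rabs ((1 - b) * (Y - X)) <= 1 * S by apply: Rabs_mul_le => //; apply: Rabs_le; lra.
  have B2 : Rabs ((b' - b) * X) <= 2 * D * 1.
    by apply: Rabs_mul_le; [rewrite Rabs_minus_sym|apply: Rabs_le; lra].
  have B3 : Rabs (b * (QY - QX)) <= 1 * (L * S) by apply: Rabs_mul_le => //; apply: Rabs_le; lra.
  have B4 : Rabs ((b - b') * QX) <= 2 * D * 1 by apply: Rabs_mul_le => //; apply: Rabs_le; lra.
  have := Rabs_triang ((1 - b) * (Y - X) + (b' - b) * X) (b * (QY - QX) + (b - b') * QX).
  have := Rabs_triang ((1 - b) * (Y - X)) ((b' - b) * X).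
  have := Rabs_triang (b * (QY - QX)) ((b - b') * QX).
  nra.
have B5 : Rabs ((1 - a) * (W - W')) <= 1 * (4 * D + (1 + L) * S)
  by apply: Rabs_mul_le => //; apply: Rabs_le; lra.
have B6 : Rabs ((a' - a) * (W' - e)) <= 2 * D * 1.
  apply: Rabs_mul_le; first by rewrite Rabs_minus_sym.
  by apply: Rabs_le; rewrite /W'; nra.
have := Rabs_triang ((1 - a) * (W - W')) ((a' - a) * (W' - e)).
nra.
Qed.

Definition supported n (t : {set 'I_n}) (x : Rvec n) := forall i, i \notin t -> x i = 0.

Section PushThenCone.

Variables (n : nat) (K : {set {set 'I_n}}) (v : 'I_n) (Q : Rvec n -> Rvec n) (L : R).
Variables (push_face cone_face : {set 'I_n} -> {set 'I_n}).

Hypothesis K_v : [set v] \in K.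
Hypothesis Q_ge0 : forall x, realization K x -> forall i, 0 <= Q x i.
Hypothesis Q_sum : forall x, realization K x -> \big[Rplus/0]_(i < n) Q x i = 1.
Hypothesis L_ge0 : 0 <= L.
Hypothesis Q_lip : forall x y, realization K x -> realization K y ->
  forall i, Rabs (Q y i - Q x i) <= L * l1dist x y.
Hypothesis push_faceP : forall t, t \in K -> push_face t \in K /\
  forall x, supported t x -> supported (push_face t) x /\ supported (push_face t) (Q x).
Hypothesis cone_faceP : forall t, t \in K -> cone_face t \in K /\ v \in cone_face t /\
  forall x, supported t x -> supported (cone_face t) (Q x).

Let H := push_then_cone Q (unit_vec v).

Lemma Q_bounds x i : realization K x -> 0 <= Q x i <= 1.
Proof.
move=> Kx; split; first exact: Q_ge0.
by rewrite -(Q_sum Kx); apply: le_sumR; apply: Q_ge0.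
Qed.

Lemma push_then_cone_realization t x : 0 <= t <= 1 -> realization K x -> realization K (H t x).
Proof.
move=> t01 Kx; have Kx' := Kx; case: Kx' => x_ge0 [sum_x [t0 [Kt0 supp_x]]].
have [f0 f1] := first_half_bounds t01; have [g0 g1] := second_half_bounds t01.
split.
  move=> i; have := Q_ge0 Kx i; have := x_ge0 i; have := unit_vec_bounds v i.
  move=> e01 x0 Q0; rewrite /H /push_then_cone.
  apply: Rplus_le_le_0_compat; apply: Rmult_le_pos; try lra.
  by apply: Rplus_le_le_0_compat; apply: Rmult_le_pos; lra.
split; first by rewrite /H /push_then_cone !sumR_lin sum_x (Q_sum Kx) sum_unit_vec; ring.
have [g_le0|g_gt0] := Rle_lt_dec (second_half t) 0.
  have [Kt1 /(_ _ supp_x) [supp1 suppQ1]] := push_faceP Kt0.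
  exists (push_face t0); split => // i i_out.
  by rewrite /H /push_then_cone supp1 // suppQ1 // (_ : second_half t = 0); [ring|lra].
have [Kt2 [v_t2 /(_ _ supp_x) suppQ2]] := cone_faceP Kt0.
exists (cone_face t0); split => // i i_out.
have i_v : i != v by apply: contraNneq i_out => ->.
by rewrite /H /push_then_cone first_half_done // suppQ2 // /unit_vec (negbTE i_v); ring.
Qed.

Lemma push_then_cone_continuous : jointly_continuous (realization K) H.
Proof.
apply: (@lipschitz_jointly_continuous _ _ _ (L + 6)); first lra.
move=> s t x y i s01 t01 Kx Ky; rewrite /H /push_then_cone.
exact: push_then_cone_lip (second_half_bounds s01) (second_half_bounds t01)
  (first_half_bounds s01) (first_half_bounds t01) (unit_vec_bounds v i)
  (realization_bounds i Kx) (realization_bounds i Ky) (Q_bounds i Kx) (Q_bounds i Ky) L_ge0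
  (second_half_lip s t) (first_half_lip s t) (l1dist_ge x y i) (Q_lip Kx Ky i).
Qed.

Lemma push_then_cone_contractible : contractible K.
Proof.
exists (unit_vec v), H; split.
- exact: realization_unit_vec.
- by move=> t x; apply: push_then_cone_realization.
- move=> x _; apply: functional_extensionality => i.
  by rewrite /H /push_then_cone (proj1 halves0) (proj2 halves0); ring.
- move=> x _; apply: functional_extensionality => i.
  by rewrite /H /push_then_cone second_half1; ring.
- exact: push_then_cone_continuous.
Qed.

End PushThenCone.

Lemma cone_contractible n (K : {set {set 'I_n}}) (v : 'I_n) :
  [set v] \in K -> (forall t, t \in K -> t :|: [set v] \in K) -> contractible K.
Proof.
move=> K_v K_cone.
apply: (@push_then_cone_contractible n K v (fun x => x) 1 (fun t => t) (fun t => t :|: [set v])).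
- exact: K_v.
- by move=> x [].
- by move=> x [_ []].
- lra.
- by move=> x y _ _ i; rewrite Rmult_1_l; apply: l1dist_ge.
- by move=> t Kt; split.
- move=> t Kt; split; first exact: K_cone.
  split=> [|x supp_x i]; first by rewrite !inE eqxx orbT.
  by rewrite !inE negb_or => /andP [/supp_x].
Qed.


(** * Segments in R^d *)

Definition seg d (a b : Rvec d) (t : R) : Rvec d := fun i => t * b i + (1 - t) * a i.

Lemma seg0 d (a b : Rvec d) : seg a b 0 = a.
Proof. by apply: functional_extensionality => i; rewrite /seg; ring. Qed.

Lemma seg1 d (a b : Rvec d) : seg a b 1 = b.
Proof. by apply: functional_extensionality => i; rewrite /seg; ring. Qed.

Lemma convex_seg d (S : Rvec d -> Prop) a b t :
  convex_set S -> S a -> S b -> 0 <= t <= 1 -> S (seg a b t).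
Proof. by move=> convS Sa Sb t01; apply: convS. Qed.

Lemma seg_shift d (x c : Rvec d) s s1 : s < 1 ->
  seg x c s1 = seg (seg x c s) c ((s1 - s) / (1 - s)).
Proof. by move=> lt_s1; apply: functional_extensionality => i; rewrite /seg; field; lra. Qed.

Lemma seg_split d (z a b : Rvec d) tc lam :
  seg z (seg a b tc) lam = seg (seg z a lam) (seg z b lam) tc.
Proof. by apply: functional_extensionality => i; rewrite /seg; ring. Qed.

Lemma vec_bounded d (f : Rvec d) : exists M, 0 < M /\ forall i, Rabs (f i) <= M.
Proof.
elim: d f => [|d IH] f; first by exists 1; split; [lra|case].
have [M [M_gt0 le_M]] := IH (fun i => f (lift ord0 i)).
exists (Rmax (Rabs (f ord0)) M); split; first exact: Rlt_le_trans M_gt0 (Rmax_r _ _).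
move=> i; case: (unliftP ord0 i) => [j ->|->]; last exact: Rmax_l.
exact: Rle_trans (le_M j) (Rmax_r _ _).
Qed.

Lemma open_setI d (A B : Rvec d -> Prop) :
  Defs.open_set A -> Defs.open_set B -> Defs.open_set (fun p => A p /\ B p).
Proof.
move=> openA openB p [Ap Bp].
have [e1 [e1_gt0 ball1]] := openA p Ap; have [e2 [e2_gt0 ball2]] := openB p Bp.
exists (Rmin e1 e2); split=> [|y near_y]; first exact: Rmin_glb_lt.
split; [apply: ball1|apply: ball2] => i; have := near_y i;
  [have := Rmin_l e1 e2|have := Rmin_r e1 e2]; lra.
Qed.

Lemma open_seg d (S : Rvec d -> Prop) a b t0 : Defs.open_set S -> S (seg a b t0) ->
  exists delta, 0 < delta /\ forall t, Rabs (t - t0) < delta -> S (seg a b t).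
Proof.
move=> openS S_t0; have [eps [eps_gt0 ball]] := openS _ S_t0.
have [M [M_gt0 le_M]] := vec_bounded (fun i => b i - a i).
exists (eps / M); split=> [|t near_t]; first exact: Rdiv_lt_0_compat.
apply: ball => i.
rewrite (_ : seg a b t i - seg a b t0 i = (t - t0) * (b i - a i)); last by rewrite /seg; ring.
rewrite Rabs_mult; apply: (Rle_lt_trans _ (Rabs (t - t0) * M)).
  by apply: Rmult_le_compat_l; [apply: Rabs_pos|apply: le_M].
apply: (Rlt_le_trans _ (eps / M * M)); first exact: Rmult_lt_compat_r.
by right; field; lra.
Qed.

Lemma lub_approx (E : R -> Prop) m : is_lub E m ->
  forall eta, 0 < eta -> exists t, E t /\ m - eta < t.
Proof.
move=> [ub_m least_m] eta eta_gt0; apply: NNPP => no_t.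
suff : m <= m - eta by lra.
by apply: least_m => t Et; apply: Rnot_lt_le => lt_t; apply: no_t; exists t.
Qed.

(* [t1] is the last exit time from the open set [A] along the segment [a, b]. *)
Lemma segment_exit d (A : Rvec d -> Prop) a b : Defs.open_set A ->
  A (seg a b 0) -> ~ A (seg a b 1) ->
  exists t1, [/\ 0 <= t1 <= 1, ~ A (seg a b t1) &
    forall eta, 0 < eta -> exists t, [/\ 0 <= t < t1, t1 - t < eta & A (seg a b t)]].
Proof.
move=> openA A0 notA1.
pose E t := 0 <= t <= 1 /\ A (seg a b t).
have E_ub : bound E by exists 1 => t [[_ t_le1] _].
have E0 : E 0 by split=> //; lra.
have [t1 lub_t1] := completeness E E_ub (ex_intro _ 0 E0).
have t1_ge0 : 0 <= t1 := proj1 lub_t1 0 E0.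
have t1_le1 : t1 <= 1 by apply: (proj2 lub_t1) => t [[]].
have notA_t1 : ~ A (seg a b t1).
  move=> A_t1; case: (Req_dec t1 1) => [t1E|t1_lt1]; first by apply: notA1; rewrite -t1E.
  have [delta [delta_gt0 near_t1]] := open_seg openA A_t1.
  pose t' := Rmin (t1 + delta / 2) 1.
  have Et' : E t'.
    split; first by rewrite /t' /Rmin; case: Rle_dec; lra.
    by apply: near_t1; rewrite /t' /Rmin; case: Rle_dec => ?; apply: Rabs_def1; lra.
  by have := proj1 lub_t1 _ Et'; rewrite /t' /Rmin; case: Rle_dec; lra.
exists t1; split=> // eta eta_gt0.
have [t [[t01 A_t] lt_t]] := lub_approx lub_t1 eta_gt0.
have le_t : t <= t1 by apply: (proj1 lub_t1).
have [t_t1|] := Req_dec t t1; first by rewrite t_t1 in A_t.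
by exists t; split=> //; lra.
Qed.

Lemma segment_crossing d (A B : Rvec d -> Prop) a b : Defs.open_set A -> Defs.open_set B ->
  (forall t, 0 <= t <= 1 -> A (seg a b t) \/ B (seg a b t)) ->
  A (seg a b 0) -> ~ A (seg a b 1) ->
  exists t, 0 <= t <= 1 /\ A (seg a b t) /\ B (seg a b t).
Proof.
move=> openA openB cover A0 notA1.
have [t1 [t1_01 notA_t1 approx]] := segment_exit openA A0 notA1.
have [|B_t1] := cover t1 t1_01; first by [].
have [delta [delta_gt0 near_t1]] := open_seg openB B_t1.
have [t [t_lt t1_t A_t]] := approx _ delta_gt0.
by exists t; split; [lra|split=> //; apply: near_t1; apply: Rabs_def1; lra].
Qed.

Lemma exit_approach d (A : Rvec d -> Prop) (x c : Rvec d) s1 : s1 < 1 ->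
  (forall eta, 0 < eta -> exists t, [/\ 0 <= t < s1, s1 - t < eta & A (seg x c t)]) ->
  forall mu, 0 < mu -> exists s lam,
    [/\ 0 <= s < 1, A (seg x c s), 0 < lam <= 1, lam < mu &
         seg x c s1 = seg (seg x c s) c lam].
Proof.
move=> s1_lt1 approx mu mu_gt0.
have [|s [s_lt s1_s A_s]] := approx (mu * (1 - s1)); first nra.
have s_lt1 : 0 < 1 - s by lra.
exists s, ((s1 - s) / (1 - s)); split; [lra|by []| | |apply: seg_shift; lra].
- split; first by apply: Rdiv_lt_0_compat; lra.
  by apply/(Rmult_le_reg_r (1 - s)) => //; rewrite /Rdiv Rmult_assoc Rinv_l; lra.
- apply/(Rmult_lt_reg_r (1 - s)) => //; rewrite /Rdiv Rmult_assoc Rinv_l; nra.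
Qed.

Close Scope R_scope.

(** * Open polyhedra in R^3 *)

Definition truth (P : Prop) : bool := if excluded_middle_informative P then true else false.

Lemma truthP (P : Prop) : reflect P (truth P).
Proof. by rewrite /truth; case: excluded_middle_informative => ?; constructor. Qed.

Open Scope R_scope.

Definition cx : 'I_3 := @Ordinal 3 0 isT.
Definition cy : 'I_3 := @Ordinal 3 1 isT.
Definition cz : 'I_3 := @Ordinal 3 2 isT.

(* [(a, b, c, e)] is the open half-space [a x + b y + c z < e]. *)
Definition halfspace := (R * R * R * R)%type.

Definition in_halfspace (q : halfspace) (p : Rvec 3) : Prop :=
  let: (a, b, c, e) := q in a * p cx + b * p cy + c * p cz < e.

Definition in_poly (l : seq halfspace) (p : Rvec 3) : bool :=
  all (fun q => truth (in_halfspace q p)) l.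

Lemma halfspace_open q : Defs.open_set (in_halfspace q).
Proof.
case: q => [[[a b] c] e] p /= in_q.
set K := Rabs a + Rabs b + Rabs c + 1.
have K_gt0 : 0 < K by rewrite /K; have := Rabs_pos a; have := Rabs_pos b; have := Rabs_pos c; lra.
set slack := e - (a * p cx + b * p cy + c * p cz).
have slack_gt0 : 0 < slack by rewrite /slack; lra.
exists (slack / K); split=> [|y near_y]; first exact: Rdiv_lt_0_compat.
have term u (i : 'I_3) : u * (y i - p i) <= Rabs u * (slack / K).
  apply: Rle_trans (Rle_abs _) _; rewrite Rabs_mult.
  by apply: Rmult_le_compat_l; [apply: Rabs_pos|apply: Rlt_le].
have := term a cx; have := term b cy; have := term c cz.
have E : (Rabs a + Rabs b + Rabs c) * (slack / K) = slack - slack / K.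
  by rewrite /K; field; have := Rabs_pos a; have := Rabs_pos b; have := Rabs_pos c; lra.
have := Rdiv_lt_0_compat _ _ slack_gt0 K_gt0.
rewrite /slack in E *; lra.
Qed.

Lemma halfspace_convex q : convex_set (in_halfspace q).
Proof.
case: q => [[[a b] c] e] x y t /= in_x in_y t01.
have -> : a * (t * x cx + (1 - t) * y cx) + b * (t * x cy + (1 - t) * y cy) +
          c * (t * x cz + (1 - t) * y cz) =
          t * (a * x cx + b * x cy + c * x cz) + (1 - t) * (a * y cx + b * y cy + c * y cz)
  by ring.
case: (Req_dec t 0) => [->|t_neq0]; first lra.
have : t * (a * x cx + b * x cy + c * x cz) < t * e by apply: Rmult_lt_compat_l; lra.
have : (1 - t) * (a * y cx + b * y cy + c * y cz) <= (1 - t) * e.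
  by apply: Rmult_le_compat_l; lra.
lra.
Qed.

Lemma in_poly_cons q l p : in_poly (q :: l) p <-> in_halfspace q p /\ in_poly l p.
Proof. by split=> [/andP [/truthP ? ?]|[? ?]] //; apply/andP; split=> //; apply/truthP. Qed.

Lemma poly_open l : Defs.open_set (in_poly l).
Proof.
elim: l => [|q l IH] p; first by move=> _; exists 1; split=> //; lra.
move=> /in_poly_cons in_p.
have [e [e_gt0 ball]] := open_setI (@halfspace_open q) IH in_p.
by exists e; split=> // y /ball /in_poly_cons.
Qed.

Lemma poly_convex l : convex_set (in_poly l).
Proof.
elim: l => [|q l IH] x y t //= /in_poly_cons [qx lx] /in_poly_cons [qy ly] t01.
by apply/in_poly_cons; split; [apply: halfspace_convex|apply: IH].
Qed.

Lemma in_poly_cat l1 l2 p : in_poly (l1 ++ l2) p = in_poly l1 p && in_poly l2 p.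
Proof. by rewrite /in_poly all_cat. Qed.

Close Scope R_scope.

(** * Codes realized by families of polyhedra *)

Definition poly_pattern n (P : 'I_n -> seq halfspace) (p : Rvec 3) : {set 'I_n} :=
  [set k | in_poly (P k) p].

Definition poly_meet n (P : 'I_n -> seq halfspace) (tau : {set 'I_n}) : seq halfspace :=
  flatten [seq P k | k <- enum tau].

Lemma in_poly_meet n (P : 'I_n -> seq halfspace) tau p :
  in_poly (poly_meet P tau) p = (tau \subset poly_pattern P p).
Proof.
have all_flatten (T : Type) (a : pred T) (ss : seq (seq T)) : all a (flatten ss) = all (all a) ss.
  by elim: ss => //= s ss IH; rewrite all_cat IH.
rewrite /poly_meet /in_poly all_flatten all_map.
apply/allP/subsetP => [in_P k k_tau|sub_tau k].
  by rewrite inE; apply: in_P; rewrite mem_enum.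
by rewrite mem_enum => /sub_tau; rewrite inE.
Qed.

(* [C] is the pullback along [h] of the code of a family of open polyhedra, and
   every trunk of [C] satisfying [good] is the pullback of a trunk of that code. *)
Definition polyhedral_model n (C : code n) (good : code n -> Prop) : Prop :=
  exists (P : 'I_n -> seq halfspace) (h : {set 'I_n} -> {set 'I_n}),
  [/\ forall p, exists2 c, c \in C & poly_pattern P p = h c,
      forall c, c \in C -> exists p, poly_pattern P p = h c &
      forall T, is_trunk C T -> good T ->
        exists tau : {set 'I_n}, T = [set c in C | tau \subset h c]].

(* Intersecting the polyhedron of the trunk [T0] with those of the [T j]. *)
Lemma polyhedral_model_convex n (C : code n) good m (T0 : code n) (T : 'I_m -> code n) :
  polyhedral_model C good -> is_trunk C T0 -> good T0 ->
  (forall j, is_trunk C (T j) /\ good (T j)) ->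
  convex_code [set [set j | c \in T j] | c in T0].
Proof.
case=> P [h [pattern_h h_pattern trunk_h]] T0_trunk T0_good T_trunk.
have [tau0 T0E] := trunk_h _ T0_trunk T0_good.
have tauP j : exists tau : {set 'I_n}, T j = [set c in C | tau \subset h c].
  by have [tr_j good_j] := T_trunk j; apply: trunk_h tr_j good_j.
pose tau j := odflt set0 [pick tau : {set 'I_n} | T j == [set c in C | tau \subset h c]].
have TE j : T j = [set c in C | tau j \subset h c].
  rewrite /tau; case: pickP => [? /eqP //|none].
  by have [t Et] := tauP j; move: (none t); rewrite Et eqxx.
exists 3, (in_poly (poly_meet P tau0)),
  (fun j => in_poly (poly_meet P tau0 ++ poly_meet P (tau j))); split.
- exact: poly_open.
- exact: poly_convex.
- move=> j; split; [exact: poly_open|split; first exact: poly_convex].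
  by move=> p; rewrite in_poly_cat => /andP [].
move=> s; split.
  case/imsetP => c c_T0 ->; move: c_T0; rewrite T0E inE => /andP [c_C tau0_c].
  have [p pE] := h_pattern _ c_C.
  exists p; split; first by rewrite in_poly_meet pE.
  by move=> j; rewrite in_poly_cat !in_poly_meet pE tau0_c inE TE inE c_C.
case=> p [in_tau0 in_U].
have [c c_C cE] := pattern_h p.
have c_T0 : c \in T0 by rewrite T0E inE c_C -cE -in_poly_meet.
apply/imsetP; exists c => //; apply/setP => j.
rewrite inE TE inE c_C /= -cE -in_poly_meet.
apply/idP/idP => [/in_U|in_j]; first by rewrite in_poly_cat => /andP [].
by apply/in_U; rewrite in_poly_cat in_tau0.
Qed.

Lemma in_Tk n (C : code n) s c : (c \in Tk C s) = (c \in C) && (s \subset c).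
Proof. by rewrite inE. Qed.

Lemma empty_code_convex n : convex_code (set0 : code n).
Proof.
exists 0, (fun _ => False), (fun _ _ => False); split.
- by move=> x [].
- by move=> x y t [].
- by move=> i; split; [move=> x []|split; [move=> x y t []|]].
- by move=> s; rewrite in_set0; split=> // [[p [[] _]]].
Qed.

Lemma Tk_family n (C : code n) s :
  [set [set j | c \in Tk C (s :|: [set j])] | c in Tk C s] = Tk C s.
Proof.
rewrite -[RHS]imset_id; apply: eq_in_imset => c; rewrite in_Tk => /andP [c_C s_c].
by apply/setP => j; rewrite inE in_Tk c_C subUset s_c sub1set.
Qed.

Definition pullback_Tk n m (C : code n) (D : code m) (f : {set 'I_n} -> {set 'I_m}) j :=
  [set c in C | f c \in Tk D [set j]].

Lemma image_family n m (C : code n) (D : code m) f : (forall c, c \in C -> f c \in D) ->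
  [set [set j | c \in pullback_Tk C D f j] | c in C] = [set f c | c in C].
Proof.
move=> f_D; apply: eq_in_imset => c c_C; apply/setP => j.
by rewrite !inE c_C /= f_D // sub1set.
Qed.

(* The inverse reads [i \in c] off [jf i \in f c], where [Tk D {jf i}] pulls
   back to [Tk C {i}]. *)
Lemma pullback_singletons_iso n m (C : code n) (D : code m) f :
  code_morphism C D f -> (forall i, exists j, pullback_Tk C D f j = Tk C [set i]) ->
  codes_isomorphic C [set f c | c in C].
Proof.
move=> [f_D f_trunk] onto.
have onto' i : exists j, pullback_Tk C D f j == Tk C [set i].
  by have [j jE] := onto i; exists j; rewrite jE.
pose jf i := xchoose (onto' i).
have memf c i : c \in C -> (jf i \in f c) = (i \in c).
  move=> c_C; have := congr1 (fun T : code n => c \in T) (eqP (xchooseP (onto' i))).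
  by rewrite /= !inE c_C /= f_D // !sub1set.
pose g (d : {set 'I_m}) : {set 'I_n} := [set i | jf i \in d].
have gf c : c \in C -> g (f c) = c by move=> c_C; apply/setP => i; rewrite inE memf.
have sieve_eq (T : finType) (A : {set T}) (P Q : pred T) :
    {in A, P =1 Q} -> [set x in A | P x] = [set x in A | Q x].
  by move=> PQ; apply/setP => x; rewrite !inE; case x_A: (x \in A); rewrite //= PQ.
exists f, g; split.
- split=> [c c_C|T [->|[tau ->]]]; first exact: imset_f.
    by left; apply/setP => c; rewrite !inE andbF.
  rewrite (sieve_eq _ _ _ (fun c => f c \in Tk D tau)); first by apply: f_trunk; right; exists tau.
  by move=> c c_C; rewrite !in_Tk f_D // imset_f.
- split=> [_ /imsetP [c c_C ->]|T [->|[sg ->]]]; first by rewrite gf.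
    by left; apply/setP => d; rewrite !inE andbF.
  right; exists [set jf i | i in sg].
  apply: sieve_eq => _ /imsetP [c c_C ->].
  rewrite gf // in_Tk c_C /=; apply/subsetP/subsetP => [sub_c _ /imsetP [i i_sg ->]|sub_fc i i_sg].
    by rewrite memf // sub_c.
  by rewrite -(memf _ _ c_C) sub_fc // imset_f.
- exact: gf.
- by move=> _ /imsetP [c c_C ->]; rewrite gf.
Qed.

(** * Subsets of ['I_6] as bit vectors *)

(* Neuron [k] of the paper is the ordinal [o(k-1)]. *)
Definition o0 : 'I_6 := @Ordinal 6 0 isT.
Definition o1 : 'I_6 := @Ordinal 6 1 isT.
Definition o2 : 'I_6 := @Ordinal 6 2 isT.
Definition o3 : 'I_6 := @Ordinal 6 3 isT.
Definition o4 : 'I_6 := @Ordinal 6 4 isT.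
Definition o5 : 'I_6 := @Ordinal 6 5 isT.
Definition ords : seq 'I_6 := [:: o0; o1; o2; o3; o4; o5].

Lemma ord6P (i : 'I_6) :
  i = o0 \/ i = o1 \/ i = o2 \/ i = o3 \/ i = o4 \/ i = o5.
Proof.
case: i => [[|[|[|[|[|[|m]]]]]] lt_m6] //.
- by left; apply/val_inj.
- by right; left; apply/val_inj.
- by do 2 right; left; apply/val_inj.
- by do 3 right; left; apply/val_inj.
- by do 4 right; left; apply/val_inj.
- by do 5 right; apply/val_inj.
Qed.

Lemma mem_ords (i : 'I_6) : i \in ords.
Proof. by case: (ord6P i) => [->|[->|[->|[->|[->|->]]]]]. Qed.

(* Sets over a finite type do not reduce under [vm_compute] (they are locked),
   so every finite check on C0 is run on this explicit encoding instead. *)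
Definition bits (s : {set 'I_6}) : seq bool := [seq i \in s | i <- ords].
Definition of_bits (bs : seq bool) : {set 'I_6} := [set i : 'I_6 | nth false bs i].

Lemma nth_bits (s : {set 'I_6}) (i : 'I_6) : nth false (bits s) i = (i \in s).
Proof. by case: (ord6P i) => [->|[->|[->|[->|[->|->]]]]]. Qed.

Lemma bits_inj : injective bits.
Proof. by move=> s t eq_st; apply/setP => i; rewrite -!nth_bits eq_st. Qed.

Lemma eq_bits (s t : {set 'I_6}) : (s == t) = (bits s == bits t).
Proof. by apply/eqP/eqP => [->|/bits_inj]. Qed.

Lemma of_bitsK bs : size bs = 6 -> bits (of_bits bs) = bs.
Proof.
case: bs => [|b0 [|b1 [|b2 [|b3 [|b4 [|b5 [|]]]]]]] //= _.
by rewrite /bits /= !inE.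
Qed.

Fixpoint bitvecs (n : nat) : seq (seq bool) :=
  if n is n'.+1 then [seq b :: l | b <- [:: false; true], l <- bitvecs n'] else [:: [::]].

Lemma bitvecsP (l : seq bool) : l \in bitvecs (size l).
Proof.
elim: l => [|b l IH] //=; rewrite !mem_cat.
by case: b; apply/orP; [right; rewrite ?cats0 ?mem_cat ?orbF|left]; apply: map_f.
Qed.

Lemma size_bitvecs n l : l \in bitvecs n -> size l = n.
Proof.
elim: n l => [|n IH] l /=; first by rewrite inE => /eqP ->.
by rewrite !mem_cat => /orP [|/orP [|//]] /mapP [l' /IH <- ->].
Qed.

Lemma bits_in_bitvecs s : bits s \in bitvecs 6.
Proof. exact: (bitvecsP (bits s)). Qed.

Definition subb (u v : seq bool) := all2 (fun a b => a ==> b) u v.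
Definition orb_seq (u v : seq bool) := [seq x.1 || x.2 | x <- zip u v].
Definition andb_seq (u v : seq bool) := [seq x.1 && x.2 | x <- zip u v].
Definition clear_bit (s : seq bool) (i : nat) := set_nth false s i false.
Definition single_bits (i : nat) := [seq k == i | k <- iota 0 6].
Definition empty_bits := nseq 6 false.

Lemma subset_bits (s t : {set 'I_6}) : (s \subset t) = subb (bits s) (bits t).
Proof.
have -> : subb (bits s) (bits t) = all (fun i => (i \in s) ==> (i \in t)) ords by [].
apply/subsetP/allP => [sub_st i _|sub_st i si]; first exact/implyP/sub_st.
exact: implyP (sub_st i (mem_ords i)) si.
Qed.

Lemma bitsU (s t : {set 'I_6}) : bits (s :|: t) = orb_seq (bits s) (bits t).
Proof. by rewrite /bits /orb_seq /= !inE. Qed.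

Lemma bitsI (s t : {set 'I_6}) : bits (s :&: t) = andb_seq (bits s) (bits t).
Proof. by rewrite /bits /andb_seq /= !inE. Qed.

Lemma bits0 : bits set0 = empty_bits.
Proof. by rewrite /bits /= !inE. Qed.

Lemma bitsT : bits [set: 'I_6] = nseq 6 true.
Proof. by rewrite /bits /= !inE. Qed.

Lemma bits1 (i : 'I_6) : bits [set i] = single_bits i.
Proof. by case: (ord6P i) => [->|[->|[->|[->|[->|->]]]]]; rewrite /bits /= !inE. Qed.

Lemma bitsD1 (s : {set 'I_6}) (i : 'I_6) : bits (s :\ i) = clear_bit (bits s) i.
Proof.
by case: (ord6P i) => [->|[->|[->|[->|[->|->]]]]]; rewrite /bits /clear_bit /= !inE.
Qed.

Lemma disjoint_bits (s t : {set 'I_6}) :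
  [disjoint s & t] = (andb_seq (bits s) (bits t) == empty_bits).
Proof. by rewrite -setI_eq0 eq_bits bitsI bits0. Qed.

Definition C0words : seq (seq nat) :=
  [:: [:: 3; 4; 5; 6]; [:: 1; 2; 3]; [:: 1; 4; 5]; [:: 2; 5; 6];
      [:: 4; 5]; [:: 5; 6]; [:: 1]; [:: 2]; [:: 3]; [::]].

Definition cw_bits (l : seq nat) : seq bool := [seq (nat_of_ord i).+1 \in l | i <- ords].
Definition C0bits : seq (seq bool) := map cw_bits C0words.

Lemma bits_cw l : bits (cw l) = cw_bits l.
Proof. by rewrite /bits /cw_bits /= !inE. Qed.

Lemma mem_C0 (c : {set 'I_6}) : (c \in C0) = (c \in map cw C0words).
Proof. by rewrite /C0 !inE !orbA. Qed.

Lemma cw_C0 l : l \in C0words -> cw l \in C0.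
Proof. by move=> l_C0; rewrite mem_C0; apply: map_f. Qed.

Lemma C0_bits (c : {set 'I_6}) : (c \in C0) = (bits c \in C0bits).
Proof.
rewrite mem_C0; apply/mapP/mapP => [[l l_C0 ->]|[l l_C0 eq_c]].
  by exists l; rewrite ?bits_cw.
by exists l => //; apply: bits_inj; rewrite bits_cw.
Qed.

Definition Delta_bits (g : seq bool) := has (subb g) C0bits.

Lemma Delta_C0_bits (g : {set 'I_6}) : (g \in Defs.Delta C0) = Delta_bits (bits g).
Proof.
rewrite inE; apply/existsP/hasP => [[c /andP [c_C0 g_c]]|[_ /mapP [l l_C0 ->] g_c]].
  by exists (bits c); rewrite -?C0_bits -?subset_bits.
by exists (cw l); rewrite cw_C0 // subset_bits bits_cw.
Qed.

Definition link_bits (s g : seq bool) :=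
  [&& Delta_bits g, andb_seq g s == empty_bits & Delta_bits (orb_seq g s)].

Lemma link_C0_bits (s g : {set 'I_6}) :
  (g \in link (Defs.Delta C0) s) = link_bits (bits s) (bits g).
Proof. by rewrite inE !Delta_C0_bits disjoint_bits bitsU. Qed.

Definition nonword_face (s : seq bool) := Delta_bits s && (s \notin C0bits).

Lemma nonword_faceP (s : {set 'I_6}) :
  s \in Defs.Delta C0 -> s \notin C0 -> nonword_face (bits s).
Proof. by rewrite /nonword_face Delta_C0_bits C0_bits => -> ->. Qed.

(** * Collapsibility of the links *)

(* [collapse_cert K steps v]: each [(s, i)] of [steps] removes the free face
   [s \ i] together with [s], and what remains at the end is [{set0; v}]. *)
Fixpoint collapse_cert (K : seq bool -> bool) (steps : seq (seq bool * nat))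
    (v : seq bool) : bool :=
  match steps with
  | [::] => all (fun g => K g == (g == empty_bits) || (g == v)) (bitvecs 6)
  | (s, i) :: steps' =>
    [&& i < 6, size s == 6, nth false s i, K s,
        all (fun g => K g ==> subb (clear_bit s i) g ==>
                      (g == clear_bit s i) || (g == s)) (bitvecs 6) &
        collapse_cert (fun g => [&& K g, g != clear_bit s i & g != s]) steps' v]
  end.

Lemma collapse_certP steps (v : 'I_6) (K : {set {set 'I_6}}) Kb :
  (forall g, (g \in K) = Kb (bits g)) -> collapse_cert Kb steps (bits [set v]) ->
  clos_refl_trans _ (@elem_collapse 6) K [set set0; [set v]].
Proof.
elim: steps K Kb => [|[s i] steps IH] K Kb KE.
  move=> /allP K_end; suff -> : K = [set set0; [set v]] by exact: rt_refl.
  apply/setP => g; rewrite KE !inE (eqP (K_end _ (bits_in_bitvecs g))).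
  by rewrite !eq_bits bits0.
case/and5P => lt_i6 /eqP size_s s_i Ks /andP [/allP free cert].
set S := of_bits s; set x := Ordinal lt_i6; set T := S :\ x.
have bitsS : bits S = s by rewrite of_bitsK.
have bitsT : bits T = clear_bit s i by rewrite bitsD1 bitsS.
apply: (@rt_trans _ _ _ (K :\ T :\ S)).
  apply: rt_step; exists T, S; split => //.
  - by rewrite KE bitsS.
  - by apply: properD1; rewrite inE.
  - by rewrite (cardsD1 x S) inE s_i.
  - move=> g Kg T_g; move: (free _ (bits_in_bitvecs g)).
    rewrite -KE Kg -bitsT -subset_bits T_g -bitsS -!eq_bits /=.
    by case/orP => /eqP ->; [left|right].
apply: (IH _ (fun g => [&& Kb g, g != clear_bit s i & g != s]) _ cert) => g.
rewrite !inE KE -bitsT -bitsS -!eq_bits.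
by case: (Kb _); case: (g == S); case: (g == T).
Qed.

Definition collapse_step_ok (K : seq (seq bool)) (s : seq bool) (i : nat) :=
  nth false s i && all (fun g => subb (clear_bit s i) g ==> (g == clear_bit s i) || (g == s)) K.

(* A search heuristic only: its output is checked by [collapse_cert]. *)
Fixpoint greedy_collapse (fuel : nat) (K : seq (seq bool)) : seq (seq bool * nat) :=
  if fuel is fuel'.+1 then
    if size K <= 2 then [::] else
    match [seq p <- [seq (s, i) | s <- K, i <- iota 0 6] | collapse_step_ok K p.1 p.2] with
    | (s, i) :: _ =>
        (s, i) :: greedy_collapse fuel' [seq g <- K | (g != clear_bit s i) && (g != s)]
    | [::] => [::]
    end
  else [::].

Definition link_collapse_steps (s : seq bool) :=
  greedy_collapse 20 [seq g <- bitvecs 6 | link_bits s g].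

Lemma links_collapse_cert :
  all (fun s => nonword_face s ==>
         has (fun v => collapse_cert (link_bits s) (link_collapse_steps s) (single_bits v))
             (iota 0 6))
      (bitvecs 6).
Proof. by vm_compute. Qed.

Lemma no_local_obstruction2 (s : {set 'I_6}) : ~ local_obstruction2 C0 s.
Proof.
case=> s_Delta [s_notC0 []].
have := implyP (allP links_collapse_cert _ (bits_in_bitvecs s)) (nonword_faceP s_Delta s_notC0).
case/hasP => v; rewrite mem_iota => /andP [_ lt_v6] cert.
exists (Ordinal lt_v6).
apply: (collapse_certP (steps := link_collapse_steps (bits s)) (Kb := link_bits (bits s))).
  by move=> g; rewrite link_C0_bits.
by rewrite bits1.
Qed.

(** * Contractibility of the links of C0 *)

Open Scope R_scope.

(* The link of the vertex 5 is the triangle 346 with the edges 14 and 26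
   attached; it is contracted by first sliding 1 onto 4 and 2 onto 6, then
   coning off to 4. *)
Definition slide (x : Rvec 6) : Rvec 6 := fun i =>
  if i == o0 then 0 else if i == o1 then 0 else
  if i == o3 then x o3 + x o0 else if i == o5 then x o5 + x o1 else x i.

Definition slide_face (t : {set 'I_6}) : {set 'I_6} :=
  t :|: ((if o0 \in t then [set o3] else set0) :|: (if o1 \in t then [set o5] else set0)).

Definition slid_face (t : {set 'I_6}) : {set 'I_6} := (slide_face t :|: [set o3]) :\ o0 :\ o1.

Lemma sumR6 (F : 'I_6 -> R) :
  \big[Rplus/0]_(i < 6) F i = F o0 + (F o1 + (F o2 + (F o3 + (F o4 + (F o5 + 0))))).
Proof.
rewrite !big_ord_recl big_ord0.
by do 6 (congr (_ + _); first by congr F; apply/val_inj).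
Qed.

Lemma sum_slide x : \big[Rplus/0]_(i < 6) slide x i = \big[Rplus/0]_(i < 6) x i.
Proof. by rewrite !sumR6 /slide /=; ring. Qed.

Lemma slide_ge0 x i : (forall j, 0 <= x j) -> 0 <= slide x i.
Proof.
move=> x_ge0; have := x_ge0 o0; have := x_ge0 o1; have := x_ge0 o3; have := x_ge0 o5.
have := x_ge0 i; rewrite /slide.
by case: (i == o0); [lra|]; case: (i == o1); [lra|]; case: (i == o3); [lra|]; case: (i == o5); lra.
Qed.

Lemma slide_lip x y i : Rabs (slide y i - slide x i) <= 2 * l1dist x y.
Proof.
have := l1dist_ge x y i; have := l1dist_ge x y o0; have := l1dist_ge x y o1.
have := l1dist_ge x y o3; have := l1dist_ge x y o5; have := Rabs_pos (y i - x i).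
move=> ? d5 d3 d1 d0 ?; rewrite /slide.
case: (i == o0); first by rewrite Rminus_0_r Rabs_R0; lra.
case: (i == o1); first by rewrite Rminus_0_r Rabs_R0; lra.
case: (i == o3).
  have := Rabs_triang (y o3 - x o3) (y o0 - x o0).
  by rewrite (_ : y o3 + y o0 - (x o3 + x o0) = y o3 - x o3 + (y o0 - x o0)); [lra|ring].
case: (i == o5); last by lra.
have := Rabs_triang (y o5 - x o5) (y o1 - x o1).
by rewrite (_ : y o5 + y o1 - (x o5 + x o1) = y o5 - x o5 + (y o1 - x o1)); [lra|ring].
Qed.

Lemma slide_faceP t x : supported t x ->
  supported (slide_face t) x /\ supported (slide_face t) (slide x).
Proof.
move=> supp_x; split=> i; rewrite !inE !negb_or => /andP [i_t i_new]; first exact: supp_x.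
have i3 : i = o3 -> x o0 = 0.
  by move=> ei; apply: supp_x; move: i_new; rewrite ei; case: (o0 \in t); rewrite !inE.
have i5 : i = o5 -> x o1 = 0.
  move=> ei; apply: supp_x; move: i_new; rewrite ei.
  by case: (o1 \in t); case: (o0 \in t); rewrite !inE.
rewrite /slide; case: (ord6P i) i_t i3 i5 => [->|[->|[->|[->|[->|->]]]]] //= i_t i3 i5.
- exact: supp_x.
- by rewrite supp_x // i3 //; ring.
- exact: supp_x.
- by rewrite supp_x // i5 //; ring.
Qed.

Lemma slid_faceP t x : supported t x -> supported (slid_face t) (slide x).
Proof.
move=> /slide_faceP [_ suppQ] i.
case: (eqVneq i o1) => [->|ne1]; first by rewrite /slide.
case: (eqVneq i o0) => [->|ne0]; first by rewrite /slide.
rewrite /slid_face !in_setD1 ne1 ne0 in_setU negb_or => /andP [i_out _].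
exact: suppQ.
Qed.

Definition slide_face_bits (g : seq bool) :=
  orb_seq g (orb_seq (if nth false g 0 then single_bits 3 else empty_bits)
                     (if nth false g 1 then single_bits 5 else empty_bits)).

Definition slid_face_bits (g : seq bool) :=
  clear_bit (clear_bit (orb_seq (slide_face_bits g) (single_bits 3)) 0) 1.

Lemma bits_slide_face t : bits (slide_face t) = slide_face_bits (bits t).
Proof.
rewrite /slide_face /slide_face_bits !bitsU -(nth_bits t o0) -(nth_bits t o1).
by case: (nth false _ 0); case: (nth false _ 1); rewrite ?bits1 ?bits0.
Qed.

Lemma bits_slid_face t : bits (slid_face t) = slid_face_bits (bits t).
Proof. by rewrite /slid_face !bitsD1 bitsU bits_slide_face bits1. Qed.

Lemma link5_faces_bits :
  link_bits (single_bits 4) (single_bits 3) &&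
  all (fun g => link_bits (single_bits 4) g ==>
          link_bits (single_bits 4) (slide_face_bits g) &&
          link_bits (single_bits 4) (slid_face_bits g)) (bitvecs 6).
Proof. by vm_compute. Qed.

Lemma link5_contractible : contractible (link (Defs.Delta C0) [set o4]).
Proof.
set K := link _ _.
have KE g : (g \in K) = link_bits (single_bits 4) (bits g) by rewrite link_C0_bits bits1.
case/andP: link5_faces_bits => K3 /allP K_faces.
have K_slide t : t \in K -> (slide_face t \in K) && (slid_face t \in K).
  move=> Kt; rewrite !KE bits_slide_face bits_slid_face.
  by apply: (implyP (K_faces _ (bits_in_bitvecs t))); rewrite -KE.
apply: (@push_then_cone_contractible _ K o3 slide 2 slide_face slid_face).
- by rewrite KE bits1.
- by move=> x [x_ge0 _] i; apply: slide_ge0.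
- by move=> x [_ [sum_x _]]; rewrite sum_slide.
- lra.
- by move=> x y _ _ i; apply: slide_lip.
- by move=> t /K_slide /andP [K1 _]; split => // x /slide_faceP.
- move=> t /K_slide /andP [_ K2]; split => //; split; last by move=> x /slid_faceP.
  by rewrite /slid_face !in_setD1 in_setU in_set1 eqxx orbT.
Qed.

Definition cone_vertex_bits (K : seq bool -> bool) (v : nat) :=
  K (single_bits v) && all (fun g => K g ==> K (orb_seq g (single_bits v))) (bitvecs 6).

Lemma links_cone_or_link5 :
  all (fun s => nonword_face s ==>
         (s == single_bits 4) || has (cone_vertex_bits (link_bits s)) (iota 0 6))
      (bitvecs 6).
Proof. by vm_compute. Qed.

Lemma no_local_obstruction1 (s : {set 'I_6}) : ~ local_obstruction1 C0 s.
Proof.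
case=> s_Delta [s_notC0 []].
have := implyP (allP links_cone_or_link5 _ (bits_in_bitvecs s)) (nonword_faceP s_Delta s_notC0).
case/orP => [/eqP s5|].
  have -> : s = [set o4] by apply: bits_inj; rewrite s5 bits1.
  exact: link5_contractible.
case/hasP => v; rewrite mem_iota => /andP [_ lt_v6] /andP [K_v /allP K_cone].
apply: (@cone_contractible _ _ (Ordinal lt_v6)); first by rewrite link_C0_bits bits1.
move=> t Kt; rewrite link_C0_bits bitsU bits1.
by apply: (implyP (K_cone _ (bits_in_bitvecs t))); rewrite -link_C0_bits.
Qed.


(** * C0 is not convex *)

Definition pattern d (U : 'I_6 -> Rvec d -> Prop) (p : Rvec d) : {set 'I_6} :=
  [set k | truth (U k p)].

Lemma patternP d (U : 'I_6 -> Rvec d -> Prop) p k : reflect (U k p) (k \in pattern U p).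
Proof. by rewrite inE; apply: truthP. Qed.

Section NonConvex.

Variables (d : nat) (X : Rvec d -> Prop) (U : 'I_6 -> Rvec d -> Prop).
Hypothesis X_convex : convex_set X.
Hypothesis U_open : forall k, Defs.open_set (U k).
Hypothesis U_convex : forall k, convex_set (U k).
Hypothesis realizes_C0 : realizes C0 U X.

Lemma pattern_rule p (P : seq bool -> bool) : X p -> all P C0bits -> P (bits (pattern U p)).
Proof.
move=> Xp /allP; apply; rewrite -C0_bits; apply/realizes_C0.
by exists p; split=> // k; split=> /patternP.
Qed.

Lemma codeword_point l : l \in C0words ->
  exists p, X p /\ forall k, U k p <-> (nat_of_ord k).+1 \in l.
Proof.
by move=> /cw_C0 /realizes_C0 [p [Xp Up]]; exists p; split=> // k; rewrite Up inE.
Qed.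

(* The rules below hold at every point of [X] because they hold in every
   codeword; they are named after the neurons of the paper. *)
Lemma rule5_46 p : X p -> U o4 p -> U o3 p \/ U o5 p.
Proof.
move=> Xp /patternP U4.
have := pattern_rule (P := fun b => nth false b o4 ==> nth false b o3 || nth false b o5) Xp.
by rewrite !nth_bits U4 => /(_ (erefl _)) /orP [] /patternP; tauto.
Qed.

Lemma rule46_3 p : X p -> U o3 p -> U o5 p -> U o2 p.
Proof.
move=> Xp /patternP U4 /patternP U6.
have := pattern_rule (P := fun b => nth false b o3 && nth false b o5 ==> nth false b o2) Xp.
by rewrite !nth_bits U4 U6 => /(_ (erefl _)) /patternP.
Qed.

Lemma rule13_2 p : X p -> U o0 p -> U o2 p -> U o1 p.
Proof.
move=> Xp /patternP U1 /patternP U3.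
have := pattern_rule (P := fun b => nth false b o0 && nth false b o2 ==> nth false b o1) Xp.
by rewrite !nth_bits U1 U3 => /(_ (erefl _)) /patternP.
Qed.

Lemma rule23_1 p : X p -> U o1 p -> U o2 p -> U o0 p.
Proof.
move=> Xp /patternP U2 /patternP U3.
have := pattern_rule (P := fun b => nth false b o1 && nth false b o2 ==> nth false b o0) Xp.
by rewrite !nth_bits U2 U3 => /(_ (erefl _)) /patternP.
Qed.

Lemma rule12_not5 p : X p -> U o0 p -> U o1 p -> ~ U o4 p.
Proof.
move=> Xp /patternP U1 /patternP U2 /patternP U5.
have := pattern_rule (P := fun b => nth false b o0 && nth false b o1 ==> ~~ nth false b o4) Xp.
by rewrite !nth_bits U1 U2 U5 => /(_ (erefl _)).
Qed.

Lemma rule4_5 p : X p -> U o3 p -> U o4 p.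
Proof.
move=> Xp /patternP U4.
have := pattern_rule (P := fun b => nth false b o3 ==> nth false b o4) Xp.
by rewrite !nth_bits U4 => /(_ (erefl _)) /patternP.
Qed.

Lemma rule3_5_not1 p : X p -> U o2 p -> U o4 p -> ~ U o0 p.
Proof. by move=> Xp U3 U5 U1; apply: rule12_not5 Xp U1 (rule13_2 Xp U1 U3) U5. Qed.

(* From a point of 145 to a point of 256 one leaves U4 inside U5, hence into U6. *)
Lemma segment_meets_35 a b : X a -> X b -> U o3 a -> U o4 a -> ~ U o3 b -> U o4 b ->
  exists tc, [/\ 0 <= tc <= 1, U o2 (seg a b tc) & U o4 (seg a b tc)].
Proof.
move=> Xa Xb U4a U5a U4b U5b.
have [|||tc [tc01 [U4c U6c]]] := @segment_crossing _ (U o3) (U o5) a b (@U_open o3) (@U_open o5).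
- by move=> t t01; apply: rule5_46; [apply: convex_seg|apply: convex_seg].
- by rewrite seg0.
- by rewrite seg1.
have Xc : X (seg a b tc) by apply: convex_seg.
by exists tc; split=> //; [apply: rule46_3|apply: rule4_5].
Qed.

(* The exit time [s1] is below 1 because U1 /\ U2 avoids the neighbourhood U5 of [c]. *)
Lemma exit_12 x c : X x -> X c -> U o0 x -> U o1 x -> U o2 x -> U o2 c -> U o4 c ->
  exists s1, [/\ 0 <= s1 < 1, ~ (U o0 (seg x c s1) /\ U o1 (seg x c s1)), U o2 (seg x c s1) &
    forall eta, 0 < eta ->
      exists t, [/\ 0 <= t < s1, s1 - t < eta & U o0 (seg x c t) /\ U o1 (seg x c t)]].
Proof.
move=> Xx Xc U1x U2x U3x U3c U5c.
have open12 := open_setI (@U_open o0) (@U_open o1).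
have [||s1 [s1_01 notA approx]] := segment_exit open12 (a := x) (b := c).
- by rewrite seg0.
- by rewrite seg1 => [[U1c _]]; apply: rule3_5_not1 Xc U3c U5c U1c.
exists s1; split=> //; last by apply: convex_seg.
split; first lra.
case: (Req_dec s1 1) => [s1E|]; last lra.
have U5c' : U o4 (seg x c 1) by rewrite seg1.
have [delta [delta_gt0 near_c]] := open_seg (@U_open o4) U5c'.
have [t [t_lt s1_t [U1t U2t]]] := approx _ delta_gt0.
have Xt : X (seg x c t) by apply: convex_seg => //; lra.
by exfalso; apply: (rule12_not5 Xt U1t U2t); apply: near_c; apply: Rabs_def1; lra.
Qed.

(* Near the exit point [w] of [exit_12], [w] lies between a point [qa] near [w]
   on the way to [a] and a point [qb] near [w] on the way to [b]; both are in
   U3, hence [qa] gains U2 and [qb] gains U1, and convexity puts [w] in U1 /\ U2. *)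
Lemma exit_12_trapped a b x tc s1 : X a -> X b -> X x -> 0 <= tc <= 1 ->
  U o0 a -> U o1 b -> s1 < 1 ->
  ~ (U o0 (seg x (seg a b tc) s1) /\ U o1 (seg x (seg a b tc) s1)) ->
  U o2 (seg x (seg a b tc) s1) ->
  (forall eta, 0 < eta -> exists t, [/\ 0 <= t < s1, s1 - t < eta &
     U o0 (seg x (seg a b tc) t) /\ U o1 (seg x (seg a b tc) t)]) ->
  False.
Proof.
move=> Xa Xb Xx tc01 U1a U2b s1_lt1 notA U3w approx.
set c := seg a b tc in notA U3w approx.
have Xc : X c by apply: convex_seg.
have [eps [eps_gt0 ball_w]] := U_open U3w.
have [M [M_gt0 le_M]] := vec_bounded (fun i => a i - b i).
have [|s [lam [s01 [U1z U2z] lam01 lam_lt Ew]]] :=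
  exit_approach (A := fun p => U o0 p /\ U o1 p) s1_lt1 approx (mu := eps / M).
  exact: Rdiv_lt_0_compat.
set z := seg x c s in U1z U2z Ew.
have Xz : X z by apply: convex_seg => //; lra.
have lamM : lam * M < eps.
  by apply/(Rmult_lt_reg_r (/ M)); [apply: Rinv_0_lt_compat|rewrite Rmult_assoc Rinv_r; lra].
have near_w (q : Rvec d) r : 0 <= r <= 1 ->
    (forall i, Rabs (q i - seg z c lam i) = Rabs (lam * r * (a i - b i))) -> U o2 q.
  move=> r01 Dq; rewrite Ew in ball_w; apply: ball_w => i.
  rewrite Dq Rabs_mult (Rabs_right (lam * r)); last by apply: Rle_ge; nra.
  have rM : r * Rabs (a i - b i) <= M by have := le_M i; have := Rabs_pos (a i - b i); nra.
  rewrite Rmult_assoc; apply: Rle_lt_trans lamM; apply: Rmult_le_compat_l; lra.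
pose qa := seg z a lam; pose qb := seg z b lam.
have Xqa : X qa by apply: convex_seg => //; lra.
have Xqb : X qb by apply: convex_seg => //; lra.
have U3qa : U o2 qa.
  by apply: (near_w _ tc) => // i; congr Rabs; rewrite /qa /c /seg; ring.
have U3qb : U o2 qb.
  apply: (near_w _ (1 - tc)); first lra.
  by move=> i; rewrite -Rabs_Ropp; congr Rabs; rewrite /qb /c /seg; ring.
have U1qa : U o0 qa by apply: convex_seg => //; lra.
have U2qb : U o1 qb by apply: convex_seg => //; lra.
apply: notA; rewrite Ew /c seg_split.
by split; apply: convex_seg => //; [apply: rule23_1|apply: rule13_2].
Qed.

Lemma no_realization : False.
Proof.
have [a [Xa Ua]] := codeword_point (isT : [:: 1; 4; 5]%nat \in C0words).
have [b [Xb Ub]] := codeword_point (isT : [:: 2; 5; 6]%nat \in C0words).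
have [x [Xx Ux]] := codeword_point (isT : [:: 1; 2; 3]%nat \in C0words).
have [tc [tc01 U3c U5c]] := segment_meets_35 Xa Xb (proj2 (Ua o3) isT) (proj2 (Ua o4) isT)
  (fun H => notF (proj1 (Ub o3) H)) (proj2 (Ub o4) isT).
have Xc : X (seg a b tc) by apply: convex_seg.
have [s1 [s1_01 notA U3w approx]] := exit_12 Xx Xc (proj2 (Ux o0) isT)
  (proj2 (Ux o1) isT) (proj2 (Ux o2) isT) U3c U5c.
exact: exit_12_trapped Xa Xb Xx tc01 (proj2 (Ua o0) isT) (proj2 (Ub o1) isT)
  (proj2 s1_01) notA U3w approx.
Qed.

End NonConvex.

Lemma C0_not_convex : ~ convex_code C0.
Proof.
case=> d [X [U [_ X_convex U_props realizes_C0]]].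
apply: (@no_realization d X U X_convex) => // k; by case: (U_props k) => [? []].
Qed.

Close Scope R_scope.

(** * Polyhedral models of C0 *)

Definition Tk_bits (s : seq bool) : seq bool := [seq subb s c | c <- C0bits].

Lemma eq_Tk_C0 (s s' : {set 'I_6}) :
  (Tk C0 s == Tk C0 s') = (Tk_bits (bits s) == Tk_bits (bits s')).
Proof.
apply/eqP/eqP => [TkE|TkE].
  rewrite /Tk_bits /C0bits -!map_comp; apply/eq_in_map => l l_C0 /=.
  have := congr1 (fun T : code 6 => cw l \in T) TkE.
  by rewrite !in_Tk cw_C0 //= !subset_bits bits_cw.
apply/setP => c; rewrite !in_Tk; case c_C0: (c \in C0) => //=.
move: c_C0 TkE; rewrite C0_bits !subset_bits /Tk_bits => c_C0 /eq_in_map; exact.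
Qed.

(* Every trunk other than [Tk C0 {i}] is the pullback along [h] of some [tau];
   the empty trunk is the pullback of the full set, which no [h c] contains. *)
Definition pullback_trunks_bits (hb : seq bool -> seq bool) (i : nat) : bool :=
  all (fun cb => ~~ subb (nseq 6 true) (hb cb)) C0bits &&
  all (fun s => (Tk_bits s == Tk_bits (single_bits i)) ||
     has (fun t => all (fun cb => subb s cb == subb t (hb cb)) C0bits) (bitvecs 6))
    (bitvecs 6).

Lemma pullback_trunks (i : 'I_6) (h : {set 'I_6} -> {set 'I_6}) hb :
  (forall c, bits (h c) = hb (bits c)) -> pullback_trunks_bits hb i ->
  forall T : code 6, is_trunk C0 T -> T != Tk C0 [set i] ->
    exists tau : {set 'I_6}, T = [set c in C0 | tau \subset h c].
Proof.
move=> hE /andP [/allP not_full /allP pulled] T [->|[s ->]] T_ne.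
  exists [set: 'I_6]; apply/setP => c; rewrite in_set0 inE.
  case c_C0: (c \in C0) => //=; rewrite subset_bits bitsT hE.
  by apply/esym/negbTE/not_full; rewrite -C0_bits.
move: (pulled _ (bits_in_bitvecs s)); rewrite -bits1 -eq_Tk_C0 (negbTE T_ne) orFb.
case/hasP => t t_vec /allP tE; exists (of_bits t); apply/setP => c; rewrite in_Tk inE.
case c_C0: (c \in C0) => //=.
rewrite !subset_bits hE of_bitsK ?(size_bitvecs t_vec) //; apply/eqP/tE.
by rewrite -C0_bits.
Qed.

(* A clause [(pos, neg)] says: if all of [pos] are in the pattern, one of [neg] is. *)
Definition sat_clauses (cls : seq (seq nat * seq nat)) (b : seq bool) : bool :=
  all (fun cl => all (nth false b) cl.1 ==> has (nth false b) cl.2) cls.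

Fixpoint AllP (A : Type) (Q : A -> Prop) (l : seq A) : Prop :=
  if l is x :: l' then Q x /\ AllP Q l' else True.

Lemma AllP_in (A : eqType) (Q : A -> Prop) l x : AllP Q l -> x \in l -> Q x.
Proof.
elim: l => [|y l IH] //= [Qy Ql]; rewrite inE => /orP [/eqP -> //|]; exact: IH.
Qed.

Lemma polyhedral_model_C0 (i : 'I_6) (P : 'I_6 -> seq halfspace) h hb cls :
  (forall c, bits (h c) = hb (bits c)) ->
  all (fun b => sat_clauses cls b ==> has (fun cb => b == hb cb) C0bits) (bitvecs 6) ->
  (forall p, sat_clauses cls (bits (poly_pattern P p))) ->
  AllP (fun b => exists p, bits (poly_pattern P p) = b) (map hb C0bits) ->
  pullback_trunks_bits hb i ->
  polyhedral_model C0 (fun T => T != Tk C0 [set i]).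
Proof.
move=> hE /allP clauses_C0 sat_P witnesses pulled; exists P, h; split.
- move=> p; have := implyP (clauses_C0 _ (bits_in_bitvecs (poly_pattern P p))) (sat_P p).
  case/hasP => _ /mapP [l l_C0 ->] /eqP pE.
  by exists (cw l); [exact: cw_C0|apply: bits_inj; rewrite pE hE bits_cw].
- move=> c c_C0; have /(AllP_in witnesses) [p pE] : hb (bits c) \in map hb C0bits.
    by apply: map_f; rewrite -C0_bits.
  by exists p; apply: bits_inj; rewrite pE hE.
- exact: pullback_trunks hE pulled.
Qed.

(* [model k]: open polyhedra in R^3 whose code is the image of C0 under
   [forget] or [forget_except]; the clauses are valid in every polyhedral
   pattern and force it to be such an image, and the points realize the images
   of the codewords, listed in the order of [C0words]. *)
Definition forget (k : 'I_6) (c : {set 'I_6}) : {set 'I_6} := c :\ k.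
Definition forget_bits (k : nat) (cb : seq bool) : seq bool := clear_bit cb k.

Lemma forgetE (k : 'I_6) c : bits (forget k c) = forget_bits k (bits c).
Proof. exact: bitsD1. Qed.

Definition forget_except (w : seq nat) (k : 'I_6) (c : {set 'I_6}) : {set 'I_6} :=
  if c == cw w then c else c :\ k.
Definition forget_except_bits (w : seq nat) (k : nat) (cb : seq bool) : seq bool :=
  if cb == cw_bits w then cb else clear_bit cb k.

Lemma forget_exceptE w (k : 'I_6) c :
  bits (forget_except w k c) = forget_except_bits w k (bits c).
Proof.
rewrite /forget_except /forget_except_bits eq_bits bits_cw.
by case: eqP => // _; apply: bitsD1.
Qed.

Open Scope R_scope.

Definition point (x y z : R) : Rvec 3 := fun i => if i == cx then x else if i == cy then y else z.

Lemma seq6_ext (A : Type) (e0 e1 e2 e3 e4 e5 b0 b1 b2 b3 b4 b5 : A) :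
  e0 = b0 -> e1 = b1 -> e2 = b2 -> e3 = b3 -> e4 = b4 -> e5 = b5 ->
  [:: e0; e1; e2; e3; e4; e5] = [:: b0; b1; b2; b3; b4; b5].
Proof. by move=> -> -> -> -> -> ->. Qed.

Ltac halfspaces_hold :=
  repeat (apply/andP; split; first (apply/truthP; lra)); try done; apply/truthP; lra.

Ltac truths := repeat match goal with
  | H : is_true (_ && _) |- _ => case/andP: H => ? ?
  | H : is_true (truth _) |- _ => move/truthP: H => H
  | H : is_true true |- _ => clear H
  end.

Ltac clauses_hold split_cases :=
  rewrite /sat_clauses /bits /poly_pattern /= !inE /=;
  repeat (apply/andP; split); try done;
  apply/implyP => H; truths;
  solve [ exfalso; lra | apply/orP; left; halfspaces_hold
        | apply/orP; right; apply/orP; left; halfspaces_hold | split_cases ].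

Ltac split_x_at_4 p :=
  case: (Rlt_le_dec (p cx) 4) => ?;
  [apply/orP; left; halfspaces_hold | apply/orP; right; apply/orP; left; halfspaces_hold].

Ltac pattern_is :=
  rewrite /bits /poly_pattern /= !inE /point /=; apply: seq6_ext;
  first [ halfspaces_hold | apply/negbTE/negP => H; truths; lra ].

Ltac witnesses_in_C0_order :=
  match goal with |- AllP _ ?l => let l' := eval vm_compute in l in change l with l' end;
  rewrite /=; repeat split.

Definition model1_poly (k : 'I_6) : seq halfspace := nth [::] [::
 [:: ((-1),0,0,0); (1,0,0,1); (0,(-1),0,0); (0,1,0,1)];
 [:: (0,(-1),0,2); (0,1,0,1); (1,0,0,6); ((-1),1,0,(-4))];
 [:: ((-1),0,0,(-2)); (1,0,0,4); (0,(-1),0,2); (0,1,0,1)];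
 [:: ((-1),0,0,0); (1,0,0,4); (0,(-1),0,0); (0,1,0,1)];
 [:: ((-1),0,0,0); (1,0,0,6); (0,(-1),0,0); (0,1,0,1)];
 [:: ((-1),0,0,(-2)); (1,0,0,6); (0,(-1),0,0); (0,1,0,1)]] k.

Definition model1_clauses : seq (seq nat * seq nat) :=
 [:: ([:: 3], [:: 4]); ([:: 5], [:: 4]); ([:: 4], [:: 3; 5]); ([:: 0], [:: 3]);
     ([:: 0; 5], [:: ]); ([:: 1; 3], [:: ]); ([:: 2; 4], [:: 3]); ([:: 2; 4], [:: 5]);
     ([:: 3; 5], [:: 2]); ([:: 1; 2; 4], [:: ])]%nat.

Lemma model1 : polyhedral_model C0 (fun T => T != Tk C0 [set o0]).
Proof.
apply: (polyhedral_model_C0 (P := model1_poly) (cls := model1_clauses)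
         (forget_exceptE [:: 1; 4; 5]%nat o0)).
- by vm_compute.
- by move=> p; clauses_hold ltac:(split_x_at_4 p).
- witnesses_in_C0_order.
  + by exists (point 3 (1/2) 0); pattern_is.
  + by exists (point 3 (-3/2) 0); pattern_is.
  + by exists (point (1/2) (1/2) 0); pattern_is.
  + by exists (point (11/2) (1/2) 0); pattern_is.
  + by exists (point (3/2) (1/2) 0); pattern_is.
  + by exists (point (9/2) (1/2) 0); pattern_is.
  + by exists (point 10 10 0); pattern_is.
  + by exists (point (11/2) (-1/2) 0); pattern_is.
  + by exists (point 3 (-1/2) 0); pattern_is.
  + by exists (point 10 10 0); pattern_is.
- by vm_compute.
Qed.

Definition model2_poly (k : 'I_6) : seq halfspace := nth [::] [::
 [:: (0,(-1),0,2); (0,1,0,1); ((-1),0,0,0); (1,1,0,2)];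
 [:: ((-1),0,0,(-5)); (1,0,0,6); (0,(-1),0,0); (0,1,0,1)];
 [:: ((-1),0,0,(-2)); (1,0,0,4); (0,(-1),0,2); (0,1,0,1)];
 [:: ((-1),0,0,0); (1,0,0,4); (0,(-1),0,0); (0,1,0,1)];
 [:: ((-1),0,0,0); (1,0,0,6); (0,(-1),0,0); (0,1,0,1)];
 [:: ((-1),0,0,(-2)); (1,0,0,6); (0,(-1),0,0); (0,1,0,1)]] k.

Definition model2_clauses : seq (seq nat * seq nat) :=
 [:: ([:: 3], [:: 4]); ([:: 5], [:: 4]); ([:: 4], [:: 3; 5]); ([:: 1], [:: 5]);
     ([:: 1; 3], [:: ]); ([:: 0; 5], [:: ]); ([:: 2; 4], [:: 3]); ([:: 2; 4], [:: 5]);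
     ([:: 3; 5], [:: 2]); ([:: 0; 2; 4], [:: ])]%nat.

Lemma model2 : polyhedral_model C0 (fun T => T != Tk C0 [set o1]).
Proof.
apply: (polyhedral_model_C0 (P := model2_poly) (cls := model2_clauses)
         (forget_exceptE [:: 2; 5; 6]%nat o1)).
- by vm_compute.
- by move=> p; clauses_hold ltac:(split_x_at_4 p).
- witnesses_in_C0_order.
  + by exists (point 3 (1/2) 0); pattern_is.
  + by exists (point 3 (-3/2) 0); pattern_is.
  + by exists (point (1/2) (1/2) 0); pattern_is.
  + by exists (point (11/2) (1/2) 0); pattern_is.
  + by exists (point (3/2) (1/2) 0); pattern_is.
  + by exists (point (9/2) (1/2) 0); pattern_is.
  + by exists (point (1/2) (-1/2) 0); pattern_is.
  + by exists (point 10 10 0); pattern_is.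
  + by exists (point 3 (-1/2) 0); pattern_is.
  + by exists (point 10 10 0); pattern_is.
- by vm_compute.
Qed.

Definition model3_poly (k : 'I_6) : seq halfspace := nth [::] [::
 [:: (0,(-1),0,2); (0,1,0,1); ((-1),0,0,0); (1,1,0,2)];
 [:: (0,(-1),0,2); (0,1,0,1); (1,0,0,6); ((-1),1,0,(-4))];
 [:: (0,0,0,0)];
 [:: ((-1),0,0,0); (1,0,0,4); (0,(-1),0,0); (0,1,0,1)];
 [:: ((-1),0,0,0); (1,0,0,6); (0,(-1),0,0); (0,1,0,1)];
 [:: ((-1),0,0,(-2)); (1,0,0,6); (0,(-1),0,0); (0,1,0,1)]] k.

Definition model3_clauses : seq (seq nat * seq nat) :=
 [:: ([:: 2], [:: ]); ([:: 3], [:: 4]); ([:: 5], [:: 4]); ([:: 4], [:: 3; 5]);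
     ([:: 0; 5], [:: ]); ([:: 1; 3], [:: ]); ([:: 0; 1; 4], [:: ])]%nat.

Lemma model3 : polyhedral_model C0 (fun T => T != Tk C0 [set o2]).
Proof.
apply: (polyhedral_model_C0 (P := model3_poly) (cls := model3_clauses)
         (forgetE o2)).
- by vm_compute.
- by move=> p; clauses_hold ltac:(split_x_at_4 p).
- witnesses_in_C0_order.
  + by exists (point 3 (1/2) 0); pattern_is.
  + by exists (point 3 (-3/2) 0); pattern_is.
  + by exists (point (1/2) (1/2) 0); pattern_is.
  + by exists (point (11/2) (1/2) 0); pattern_is.
  + by exists (point (9/5) (1/2) 0); pattern_is.
  + by exists (point (21/5) (1/2) 0); pattern_is.
  + by exists (point (1/2) (-1/2) 0); pattern_is.
  + by exists (point (11/2) (-1/2) 0); pattern_is.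
  + by exists (point 10 10 0); pattern_is.
  + by exists (point 10 10 0); pattern_is.
- by vm_compute.
Qed.

(* Tapering prisms along the positive x, y and z axes, overlapping near the origin. *)
Definition axis_spikes : seq (seq halfspace) := [::
 [:: ((-1),0,0,1); (0,1,0,1); (0,(-1),0,1); (0,0,1,1); (0,0,(-1),1);
     (1,9,0,10); (1,(-9),0,10); (1,0,9,10); (1,0,(-9),10)];
 [:: (0,(-1),0,1); (1,0,0,1); ((-1),0,0,1); (0,0,1,1); (0,0,(-1),1);
     (9,1,0,10); ((-9),1,0,10); (0,1,9,10); (0,1,(-9),10)];
 [:: (0,0,(-1),1); (1,0,0,1); ((-1),0,0,1); (0,1,0,1); (0,(-1),0,1);
     (9,0,1,10); ((-9),0,1,10); (0,9,1,10); (0,(-9),1,10)]].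

Definition model4_poly (k : 'I_6) : seq halfspace := nth [::] (axis_spikes ++ [::
 [:: (0,0,0,0)];
 [:: ((-1),(-1),(-1),(-9))];
 [:: ((-1),(-1),(-1),(-9)); (1,0,0,1)]]) k.

Definition model4_clauses : seq (seq nat * seq nat) :=
 [:: ([:: 3], [:: ]); ([:: 5], [:: 4]); ([:: 0; 1], [:: 2]); ([:: 0; 2], [:: 1]);
     ([:: 1; 2], [:: 0]); ([:: 0; 1; 4], [:: ]); ([:: 0; 5], [:: ]); ([:: 1; 4], [:: 5]);
     ([:: 2; 4], [:: 5])]%nat.

Lemma model4 : polyhedral_model C0 (fun T => T != Tk C0 [set o3]).
Proof.
apply: (polyhedral_model_C0 (P := model4_poly) (cls := model4_clauses)
         (forgetE o3)).
- by vm_compute.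
- by move=> p; clauses_hold ltac:(fail).
- witnesses_in_C0_order.
  + by exists (point 0 0 (19/2)); pattern_is.
  + by exists (point 0 0 0); pattern_is.
  + by exists (point (19/2) 0 0); pattern_is.
  + by exists (point 0 (19/2) 0); pattern_is.
  + by exists (point 5 5 0); pattern_is.
  + by exists (point 0 5 5); pattern_is.
  + by exists (point 5 0 0); pattern_is.
  + by exists (point 0 5 0); pattern_is.
  + by exists (point 0 0 5); pattern_is.
  + by exists (point (-5) (-5) (-5)); pattern_is.
- by vm_compute.
Qed.

Definition model5_poly (k : 'I_6) : seq halfspace := nth [::] (axis_spikes ++ [::
 [:: ((-1),(-1),(-1),(-9)); (0,9,1,10); (0,(-9),1,10); ((-9),0,1,10)];
 [:: (0,0,0,0)];
 [:: ((-1),(-1),(-1),(-9)); (9,0,1,10); ((-9),0,1,10); (0,(-9),1,10)]]) k.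

Definition model5_clauses : seq (seq nat * seq nat) :=
 [:: ([:: 4], [:: ]); ([:: 0; 1], [:: 2]); ([:: 0; 2], [:: 1]); ([:: 1; 2], [:: 0]);
     ([:: 0; 1; 3], [:: ]); ([:: 0; 1; 5], [:: ]); ([:: 3; 5], [:: 2]); ([:: 2; 3], [:: 5]);
     ([:: 2; 5], [:: 3]); ([:: 0; 5], [:: ]); ([:: 1; 3], [:: ])]%nat.

Lemma model5 : polyhedral_model C0 (fun T => T != Tk C0 [set o4]).
Proof.
apply: (polyhedral_model_C0 (P := model5_poly) (cls := model5_clauses)
         (forgetE o4)).
- by vm_compute.
- by move=> p; clauses_hold ltac:(fail).
- witnesses_in_C0_order.
  + by exists (point 0 0 (19/2)); pattern_is.
  + by exists (point 0 0 0); pattern_is.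
  + by exists (point (19/2) 0 0); pattern_is.
  + by exists (point 0 (19/2) 0); pattern_is.
  + by exists (point 5 0 5); pattern_is.
  + by exists (point 0 5 5); pattern_is.
  + by exists (point 5 0 0); pattern_is.
  + by exists (point 0 5 0); pattern_is.
  + by exists (point 0 0 5); pattern_is.
  + by exists (point (-5) (-5) (-5)); pattern_is.
- by vm_compute.
Qed.

Definition model6_poly (k : 'I_6) : seq halfspace := nth [::] (axis_spikes ++ [::
 [:: ((-1),(-1),(-1),(-9)); (0,1,0,1)];
 [:: ((-1),(-1),(-1),(-9))];
 [:: (0,0,0,0)]]) k.

Definition model6_clauses : seq (seq nat * seq nat) :=
 [:: ([:: 5], [:: ]); ([:: 3], [:: 4]); ([:: 0; 1], [:: 2]); ([:: 0; 2], [:: 1]);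
     ([:: 1; 2], [:: 0]); ([:: 0; 1; 4], [:: ]); ([:: 1; 3], [:: ]); ([:: 0; 4], [:: 3]);
     ([:: 2; 4], [:: 3])]%nat.

Lemma model6 : polyhedral_model C0 (fun T => T != Tk C0 [set o5]).
Proof.
apply: (polyhedral_model_C0 (P := model6_poly) (cls := model6_clauses)
         (forgetE o5)).
- by vm_compute.
- by move=> p; clauses_hold ltac:(fail).
- witnesses_in_C0_order.
  + by exists (point 0 0 (19/2)); pattern_is.
  + by exists (point 0 0 0); pattern_is.
  + by exists (point (19/2) 0 0); pattern_is.
  + by exists (point 0 (19/2) 0); pattern_is.
  + by exists (point 5 0 5); pattern_is.
  + by exists (point 5 5 0); pattern_is.
  + by exists (point 5 0 0); pattern_is.
  + by exists (point 0 5 0); pattern_is.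
  + by exists (point 0 0 5); pattern_is.
  + by exists (point (-5) (-5) (-5)); pattern_is.
- by vm_compute.
Qed.

Close Scope R_scope.

(** * Minimality *)

Lemma C0_models (i : 'I_6) : polyhedral_model C0 (fun T => T != Tk C0 [set i]).
Proof.
by case: (ord6P i) => [->|[->|[->|[->|[->|->]]]]];
  [exact: model1|exact: model2|exact: model3|exact: model4|exact: model5|exact: model6].
Qed.

Lemma Tk_C0_set0 : Tk C0 set0 = C0.
Proof. by apply/setP => c; rewrite in_Tk sub0set andbT. Qed.

Lemma C0_neq_Tk1 (i : 'I_6) : C0 != Tk C0 [set i].
Proof.
apply/negP => /eqP C0E; have : cw [::] \in C0 by apply: cw_C0.
by rewrite C0E in_Tk sub1set => /andP [_]; rewrite inE in_nil.
Qed.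

Definition avoids_Tk1_bits (s : seq bool) (i : nat) :=
  (Tk_bits s != Tk_bits (single_bits i)) &&
  all (fun k => Tk_bits (orb_seq s (single_bits k)) != Tk_bits (single_bits i)) (iota 0 6).

Lemma proper_trunks_avoid_Tk1 :
  all (fun s => (Tk_bits s == Tk_bits empty_bits) || avoids_Tk1_bits s 0 || avoids_Tk1_bits s 4)
      (bitvecs 6).
Proof. by vm_compute. Qed.

Lemma trunk_convex_of_avoid (i : 'I_6) s : avoids_Tk1_bits (bits s) i -> convex_code (Tk C0 s).
Proof.
case/andP => Tk_s /allP Tk_sk; rewrite -Tk_family.
apply: (polyhedral_model_convex (C0_models i)).
- by right; exists s.
- by rewrite eq_Tk_C0 bits1.
- move=> j; split; first by right; exists (s :|: [set j]).
  by rewrite eq_Tk_C0 bitsU !bits1; apply: Tk_sk; rewrite mem_iota; exact: ltn_ord.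
Qed.

Lemma proper_trunk_convex (T : code 6) : is_trunk C0 T -> T \proper C0 -> convex_code T.
Proof.
case=> [->|[s ->]] T_proper; first exact: empty_code_convex.
have := allP proper_trunks_avoid_Tk1 _ (bits_in_bitvecs s).
rewrite -bits0 -eq_Tk_C0 Tk_C0_set0.
case/orP => [/orP [/eqP TkE|]|]; first by rewrite TkE properxx in T_proper.
- exact: (@trunk_convex_of_avoid o0).
- exact: (@trunk_convex_of_avoid o4).
Qed.

Lemma image_convex m (D : code m) (f : {set 'I_6} -> {set 'I_m}) :
  code_morphism C0 D f -> ~ codes_isomorphic C0 [set f c | c in C0] ->
  convex_code [set f c | c in C0].
Proof.
move=> f_mor not_iso.
have [i pullback_ne] : exists i : 'I_6, forall j, pullback_Tk C0 D f j != Tk C0 [set i].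
  apply: NNPP => all_hit; apply/not_iso/(pullback_singletons_iso f_mor) => i.
  apply: NNPP => none; apply: all_hit; exists i => j.
  by apply/eqP => E; apply: none; exists j.
rewrite -(image_family (proj1 f_mor)).
apply: (polyhedral_model_convex (C0_models i)).
- by right; exists set0; rewrite Tk_C0_set0.
- exact: C0_neq_Tk1.
- by move=> j; split=> //; apply: (proj2 f_mor); right; exists [set j].
Qed.


Theorem theorem5p7 :
  minimally_non_convex C0 /\
  (forall s : {set 'I_6}, ~ local_obstruction1 C0 s) /\
  (forall s : {set 'I_6}, ~ local_obstruction2 C0 s).
Proof.
split; last split.
- split; [exact: C0_not_convex|exact: proper_trunk_convex|move=> m D f; exact: image_convex].
- exact: no_local_obstruction1.
- exact: no_local_obstruction2.
Qed.
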